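(* Let $(\mathbf{P},d_{\mathbf{P}})$ be a finite metric poset and $M,N,O$ be $\mathbf{P}$-modules. Let $(\mathbf{Q}_1,f_1\dashv g_1,h_1\dashv i_1,\Gamma_1)$ be a Galois coupling of $(M,N)$ and $(\mathbf{Q}_2,f_2\dashv g_2,h_2\dashv i_2,\Gamma_2)$ a Galois coupling of $(N,O)$. Let $\mathbf{R}=\{(q_1,q_2)\in\mathbf{Q}_1\times\mathbf{Q}_2\mid h_1(q_1)=f_2(q_2)\}$ with the product order and projections $\pi_1,\pi_2$, and suppose $(\mathbf{R},\ f_1\pi_1\dashv\iota_1g_1,\ h_2\pi_2\dashv\iota_2i_2,\ \Psi)$ is a Galois coupling of $(M,O)$, where $\iota_j:\mathbf{Q}_j\to\mathbf{R}$ are monotone maps right adjoint to $\pi_j$ with $\pi_j\iota_j=\mathrm{id}$ ($j=1,2$). Then \[ \mathrm{cost}(\Psi)\ \le\ \mathrm{cost}(\Gamma_1)+\mathrm{cost}(\Gamma_2). \]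
   Context: Fix a field $k$; $\mathrm{vect}$ is the category of finite-dimensional $k$-vector spaces. A finite poset is a category with a unique morphism $x\to y$ iff $x\le y$; a $\mathbf{P}$-module is a functor $\mathbf{P}\to\mathrm{vect}$. For a monotone map $g$, $g^*$ denotes precomposition with $g$. A Galois connection $f:\mathbf{Q}\rightleftarrows\mathbf{P}:g$ consists of monotone maps $f,g$ with $f(u)\le x\iff u\le g(x)$; it is a Galois insertion if also $f\circ g=\mathrm{id}_{\mathbf{P}}$. A Galois coupling of $(M,N)$ is $(\mathbf{Q},f\dashv g,h\dashv i,\Gamma)$ with $\mathbf{Q}$ a finite poset, $f:\mathbf{Q}\rightleftarrows\mathbf{P}:g$, $h:\mathbf{Q}\rightleftarrows\mathbf{P}:i$ Galois insertions and $\Gamma\in\mathrm{vect}^{\mathbf{Q}}$ with $g^*\Gamma\cong M$, $i^*\Gamma\cong N$. Its cost is $\mathrm{cost}(\Gamma)=\sup_{q\in\mathbf{Q}}d_{\mathbf{P}}(f(q),h(q))$ (computed with the two left adjoints of the coupling). *)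

From HB Require Import structures.
From mathcomp Require Import all_boot all_order all_algebra.
From mathcomp Require Import reals.
Set Implicit Arguments. Unset Strict Implicit. Unset Printing Implicit Defensive.
Import Order.TTheory GRing.Theory Num.Theory.
Local Open Scope ring_scope.
Local Open Scope order_scope.

Definition is_metric (R : realType) (T : eqType) (d : T -> T -> R) : Prop :=
  [/\ forall x y, d x y = 0 <-> x = y,
      forall x y, d x y = d y x &
      forall x y z, d x z <= d x y + d y z].

(* P-modules: functors P -> vect (finite-dimensional k-vector spaces).
   The space at x is k^(pdim x) (row vectors); the structure map for
   x <= y is a matrix 'M_(pdim x, pdim y) acting on the right
   (v |-> v *m pmap x y).  Only the values of pmap on pairs x <= y are
   meaningful. *)
Record pmod (k : fieldType) (disp : Order.disp_t) (P : finPOrderType disp) := PMod {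
  pdim : P -> nat;
  pmap : forall x y : P, 'M[k]_(pdim x, pdim y);
  pmap_id : forall x : P, pmap x x = 1%:M;
  pmap_comp : forall x y z : P, x <= y -> y <= z ->
                pmap x z = pmap x y *m pmap y z
}.

(* iso_pullback g G M : the pullback g^* G of the Q-module G along the
   monotone map g : P -> Q is isomorphic to the P-module M, i.e. there is
   a natural isomorphism M ~> g^* G (componentwise invertible matrices
   phi x : M(x) -> G(g x) commuting with the structure maps). *)
Definition iso_pullback (k : fieldType) (dP dQ : Order.disp_t)
    (P : finPOrderType dP) (Q : finPOrderType dQ)
    (g : P -> Q) (G : pmod k Q) (M : pmod k P) : Prop :=
  exists phi : forall x : P, 'M[k]_(pdim M x, pdim G (g x)),
  exists psi : forall x : P, 'M[k]_(pdim G (g x), pdim M x),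
    [/\ forall x, phi x *m psi x = 1%:M,
        forall x, psi x *m phi x = 1%:M &
        forall x y, x <= y -> pmap M x y *m phi y = phi x *m pmap G (g x) (g y)].

Definition galois_connection (dP dQ : Order.disp_t)
    (P : finPOrderType dP) (Q : finPOrderType dQ) (f : Q -> P) (g : P -> Q) : Prop :=
  [/\ {homo f : u v / u <= v}, {homo g : x y / x <= y} &
      forall (u : Q) (x : P), (f u <= x) = (u <= g x)].

Definition galois_insertion (dP dQ : Order.disp_t)
    (P : finPOrderType dP) (Q : finPOrderType dQ) (f : Q -> P) (g : P -> Q) : Prop :=
  galois_connection f g /\ forall x : P, f (g x) = x.

Definition galois_coupling (k : fieldType) (dP dQ : Order.disp_t)
    (P : finPOrderType dP) (Q : finPOrderType dQ)
    (f : Q -> P) (g : P -> Q) (h : Q -> P) (i : P -> Q)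
    (G : pmod k Q) (M N : pmod k P) : Prop :=
  [/\ galois_insertion f g, galois_insertion h i,
      iso_pullback g G M & iso_pullback i G N].

(* cost of a coupling: sup_{q in Q} d(f q, h q)  (0 if Q is empty; all
   distances are >= 0). *)
Definition cost (R : realType) (dP dQ : Order.disp_t)
    (P : finPOrderType dP) (Q : finPOrderType dQ)
    (d : P -> P -> R) (f h : Q -> P) : R :=
  (\big[Num.max/0]_(q : Q) d (f q) (h q))%R.

Fact fprod_display : Order.disp_t. Proof. exact: Order.Disp tt tt. Qed.

Section FiberProd.
Context {d1 d2 dP : Order.disp_t} (Q1 : finPOrderType d1) (Q2 : finPOrderType d2)
  (P : finPOrderType dP) (h1 : Q1 -> P) (f2 : Q2 -> P).

Definition fprodR := {q : Q1 * Q2 | h1 q.1 == f2 q.2}.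
HB.instance Definition _ := Finite.on fprodR.

Definition fprod_le (a b : fprodR) : bool :=
  ((val a).1 <= (val b).1) && ((val a).2 <= (val b).2).

Fact fprod_le_refl : reflexive fprod_le.
Proof. by move=> a; rewrite /fprod_le !lexx. Qed.

Fact fprod_le_anti : antisymmetric fprod_le.
Proof.
move=> a b /andP[/andP[h1a h2a] /andP[h1b h2b]]; apply: val_inj.
case: a b h1a h2a h1b h2b => [[a1 a2] ?] [[b1 b2] ?] /= h1a h2a h1b h2b.
by rewrite (@le_anti _ _ a1 b1) ?h1a ?h1b // (@le_anti _ _ a2 b2) ?h2a ?h2b.
Qed.

Fact fprod_le_trans : transitive fprod_le.
Proof.
move=> b a c /andP[hab1 hab2] /andP[hbc1 hbc2].
by rewrite /fprod_le (le_trans hab1 hbc1) (le_trans hab2 hbc2).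
Qed.

HB.instance Definition _ := Order.Le_isPOrder.Build fprod_display fprodR
  fprod_le_refl fprod_le_anti fprod_le_trans.

Definition fpi1 (r : fprodR) : Q1 := (val r).1.
Definition fpi2 (r : fprodR) : Q2 := (val r).2.
End FiberProd.

(* The cost of the composite coupling is a maximum over pairs (q1, q2) with
   h1 q1 = f2 q2; for such a pair the triangle inequality through this common
   point bounds d(f1 q1, h2 q2) by d(f1 q1, h1 q1) + d(f2 q2, h2 q2), each of
   which is at most the cost of the corresponding coupling. *)

From HB Require Import structures.
From mathcomp Require Import all_boot all_order all_algebra.
From mathcomp Require Import reals.
Import Order.TTheory GRing.Theory Num.Theory.
Local Open Scope ring_scope.

Section Cost.
Variables (R : realType) (dP dQ : Order.disp_t).
Variables (P : finPOrderType dP) (Q : finPOrderType dQ) (dist : P -> P -> R).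

Lemma cost_ge0 (f h : Q -> P) : 0 <= cost dist f h.
Proof. exact: bigmax_ge_id. Qed.

Lemma le_cost (f h : Q -> P) (q : Q) : dist (f q) (h q) <= cost dist f h.
Proof. exact: le_bigmax. Qed.

Lemma cost_le (f h : Q -> P) (c : R) :
  0 <= c -> (forall q, dist (f q) (h q) <= c) -> cost dist f h <= c.
Proof. by move=> c_ge0 le_c; apply: bigmax_le. Qed.

End Cost.

Lemma cost_fprod_le (R : realType) (dP d1 d2 : Order.disp_t)
    (P : finPOrderType dP) (Q1 : finPOrderType d1) (Q2 : finPOrderType d2)
    (dist : P -> P -> R) (f1 h1 : Q1 -> P) (f2 h2 : Q2 -> P) :
  (forall x y z, dist x z <= dist x y + dist y z) ->
  cost dist (f1 \o @fpi1 _ _ _ _ _ _ h1 f2) (h2 \o @fpi2 _ _ _ _ _ _ h1 f2)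
    <= cost dist f1 h1 + cost dist f2 h2.
Proof.
move=> triangle; apply: cost_le => [|r /=]; first by rewrite addr_ge0 ?cost_ge0.
have glue : h1 (fpi1 r) = f2 (fpi2 r) by apply/eqP; exact: valP r.
apply: le_trans (triangle _ (h1 (fpi1 r)) _) _.
by rewrite lerD ?le_cost // glue le_cost.
Qed.

Theorem lemma3p5 (k : fieldType) (R : realType) (dP d1 d2 : Order.disp_t)
    (P : finPOrderType dP) (dist : P -> P -> R) (hdist : is_metric dist)
    (M N O : pmod k P)
    (Q1 : finPOrderType d1) (f1 : Q1 -> P) (g1 : P -> Q1)
    (h1 : Q1 -> P) (i1 : P -> Q1) (Gamma1 : pmod k Q1)
    (HGamma1 : galois_coupling f1 g1 h1 i1 Gamma1 M N)
    (Q2 : finPOrderType d2) (f2 : Q2 -> P) (g2 : P -> Q2)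
    (h2 : Q2 -> P) (i2 : P -> Q2) (Gamma2 : pmod k Q2)
    (HGamma2 : galois_coupling f2 g2 h2 i2 Gamma2 N O)
    (iota1 : Q1 -> fprodR h1 f2) (iota2 : Q2 -> fprodR h1 f2)
    (Hiota1 : galois_insertion (@fpi1 _ _ _ _ _ _ h1 f2) iota1)
    (Hiota2 : galois_insertion (@fpi2 _ _ _ _ _ _ h1 f2) iota2)
    (Psi : pmod k (fprodR h1 f2))
    (HPsi : galois_coupling (f1 \o @fpi1 _ _ _ _ _ _ h1 f2) (iota1 \o g1)
                            (h2 \o @fpi2 _ _ _ _ _ _ h1 f2) (iota2 \o i2) Psi M O) :
  cost dist (f1 \o @fpi1 _ _ _ _ _ _ h1 f2) (h2 \o @fpi2 _ _ _ _ _ _ h1 f2)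
    <= cost dist f1 h1 + cost dist f2 h2.
Proof.
(* Only the triangle inequality matters: the module and adjunction data
   constrain which couplings exist, not their costs. *)
case: hdist => _ _ triangle.
exact: cost_fprod_le.
Qed.
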